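(* Let $\mathcal C\subseteq(\mathbb C^2)^{\otimes n}$ be the codespace of a stabilizer code and let $\pi\in S_n$ be a qubit permutation with permutation operator $U_\pi$ such that $U_\pi\mathcal C=\mathcal C$, the restriction $U_\pi|_{\mathcal C}$ is not a scalar multiple of the identity, and $(U_\pi|_{\mathcal C})^2$ is a scalar multiple of the identity on $\mathcal C$. Then the order of $\pi$ in $S_n$ is even.
   Context: $U_\pi$ denotes the unitary on $(\mathbb C^2)^{\otimes n}$ that permutes tensor factors according to $\pi$; the order (period) of $\pi$ is the least $p\ge1$ with $\pi^p=\mathrm{id}$. *)

(* Qubit Hilbert space (C^2)^{(x)n} modelled as algC^(2^n),
   computational basis index a : 'I_(2^n), bit j of a = j-th qubit value. *)
From HB Require Import structures.
From mathcomp Require Import all_boot all_order all_algebra all_fingroup all_field.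
Set Implicit Arguments. Unset Strict Implicit. Unset Printing Implicit Defensive.
Import Order.TTheory GRing.Theory Num.Theory.
Local Open Scope ring_scope.

Definition qbit (n : nat) (a : 'I_(2 ^ n)) (j : 'I_n) : bool := odd (a %/ 2 ^ j).

(* Pauli operator  i^k X^x Z^z  with X^x = prod_j X_j^{x_j}, Z^z = prod_j Z_j^{z_j} *)
Arguments qbit : clear implicits.
Definition pauli_mx (n k : nat) (x z : {ffun 'I_n -> bool}) : 'M[algC]_(2 ^ n) :=
  \matrix_(a, b)
    ('i ^+ k * (-1) ^+ (\sum_(j < n) (z j && qbit n b j : nat))
      * ([forall j, qbit n a j == xorb (qbit n b j) (x j)] : nat)%:R).

Arguments pauli_mx : clear implicits.

Definition is_pauli (n : nat) (M : 'M[algC]_(2 ^ n)) : Prop :=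
  exists k x z, M = pauli_mx n k x z :> 'M[algC]_(2 ^ n).

(* stabilizer group: abelian subgroup of the n-qubit Pauli group not containing -I
   (closure under products and containing I makes a set of Paulis, which is finite,
   a subgroup) *)
Definition stabilizer_group (n : nat) (S : 'M[algC]_(2 ^ n) -> Prop) : Prop :=
  [/\ forall M, S M -> is_pauli M,
      S 1%:M,
      forall A B, S A -> S B -> S (A *m B),
      forall A B, S A -> S B -> A *m B = B *m A
    & ~ S (- 1%:M)].
Arguments stabilizer_group : clear implicits.

Definition codespace (n : nat) (S : 'M[algC]_(2 ^ n) -> Prop) (v : 'cV[algC]_(2 ^ n)) : Prop :=
  forall M, S M -> M *m v = v.

Definition perm_op (n : nat) (pi : 'S_n) : 'M[algC]_(2 ^ n) :=
  \matrix_(a, b) ([forall j, qbit n a (pi j) == qbit n b j] : nat)%:R.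
Arguments codespace : clear implicits.
Arguments perm_op : clear implicits.

(* Since perm_op is multiplicative (up to reversing the order), U := U_pi
   satisfies U ^+ p = 1 for the order p of pi.  If p = 2m + 1 is odd and U^2
   acts on the codespace as a scalar c, then v = U^(2m+1) v = c^m U v for
   every codeword v, so U acts on the codespace as the scalar (c^m)^-1. *)
From mathcomp Require Import all_boot all_order all_algebra all_fingroup all_field.

Set Implicit Arguments.
Unset Strict Implicit.
Unset Printing Implicit Defensive.

Import GRing.Theory.

Lemma modn_expn2S_bits a k :
  (a %% 2 ^ k.+1 = a %% 2 ^ k + odd (a %/ 2 ^ k) * 2 ^ k)%N.
Proof.
rewrite {1}(divn_eq (a %% 2 ^ k.+1) (2 ^ k)) expnS -modn_divl modn2.
by rewrite modn_dvdm ?dvdn_mull // addnC.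
Qed.

Lemma modn_expn2_bits a k :
  (a %% 2 ^ k = \sum_(j < k) odd (a %/ 2 ^ j) * 2 ^ j)%N.
Proof.
elim: k => [|k IHk]; first by rewrite big_ord0 expn0 modn1.
by rewrite big_ord_recr /= -IHk modn_expn2S_bits.
Qed.

Lemma qbit_inj n (a b : 'I_(2 ^ n)) : (forall j, qbit n a j = qbit n b j) -> a = b.
Proof.
move=> eq_ab; apply: val_inj => /=.
rewrite -(modn_small (ltn_ord a)) -(modn_small (ltn_ord b)) !modn_expn2_bits.
by apply: eq_bigr => j _; rewrite -[odd _]/(qbit n a j) eq_ab.
Qed.

Lemma qbit_onto n (f : 'I_n -> bool) : exists a : 'I_(2 ^ n), forall j, qbit n a j = f j.
Proof.
pose bits (a : 'I_(2 ^ n)) := [ffun j => qbit n a j].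
have bits_inj : injective bits.
  by move=> a b /ffunP eq_ab; apply: qbit_inj => j; have := eq_ab j; rewrite !ffunE.
have := inj_card_onto bits_inj.
rewrite card_ffun card_bool !card_ord leqnn => /(_ isT (finfun f)) /codomP[a fa].
by exists a => j; have := congr1 (fun g : {ffun 'I_n -> bool} => g j) fa; rewrite !ffunE.
Qed.

Local Open Scope ring_scope.

Section PermOp.

Variable n : nat.

Lemma perm_op1 : perm_op n 1 = 1%:M.
Proof.
apply/matrixP => a b; rewrite !mxE; congr (_%:R); congr nat_of_bool.
apply/forallP/eqP => [qbit_ab | ->]; last by move=> j; rewrite perm1.
by apply: qbit_inj => j; have := qbit_ab j; rewrite perm1 => /eqP.
Qed.

Lemma perm_opM (s t : 'S_n) : perm_op n s *m perm_op n t = perm_op n (t * s)%g.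
Proof.
apply/matrixP => a b; have [c qbit_c] := qbit_onto (fun j => qbit n a (s j)).
rewrite !mxE (bigD1 c) //= big1 ?addr0 => [|d ne_dc]; rewrite !mxE.
  have -> : [forall j, qbit n a (s j) == qbit n c j] by apply/forallP => j; rewrite qbit_c.
  rewrite mul1r; congr (_%:R); congr nat_of_bool.
  by apply: eq_forallb => j; rewrite permM qbit_c.
case: forallP => [qbit_d | _]; last by rewrite mul0r.
suff eq_dc : d = c by rewrite eq_dc eqxx in ne_dc.
by apply: qbit_inj => j; rewrite qbit_c; apply/esym/eqP.
Qed.

Lemma perm_opX (s : 'S_n) k : perm_op n s ^+ k = perm_op n (s ^+ k)%g.
Proof.
elim: k => [|k IHk]; first by rewrite expr0 expg0 perm_op1.
by rewrite exprS IHk -mulmxE perm_opM expgSr.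
Qed.

Lemma perm_op_order (s : 'S_n) : perm_op n s ^+ #[s]%g = 1%:M.
Proof. by rewrite perm_opX expg_order perm_op1. Qed.

End PermOp.

Lemma mulmx_scale_of_odd_order (F : fieldType) m (U : 'M[F]_m) p c (v : 'cV_m) :
  odd p -> U ^+ p = 1%:M -> U *m (U *m v) = c *: v ->
  U *m v = (c ^+ p./2)^-1 *: v.
Proof.
move=> odd_p Up_1 UUv.
have U2Xv k : (U ^+ 2) ^+ k *m v = c ^+ k *: v.
  elim: k => [|k IHk]; first by rewrite !expr0 mul1mx scale1r.
  by rewrite exprSr -mulmxA expr2 -mulmxA UUv -scalemxAr IHk scalerA exprSr mulrC.
have v_eq : v = c ^+ p./2 *: (U *m v).
  have p_eq : p = (2 * p./2).+1 by rewrite -{1}[p]odd_double_half odd_p mul2n.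
  rewrite -{1}(mul1mx v) -Up_1 {1}p_eq exprS exprM.
  by rewrite -mulmxA U2Xv -scalemxAr.
have [cm0 | cm_neq0] := eqVneq (c ^+ p./2) 0.
  by rewrite v_eq cm0 !scale0r mulmx0 scaler0.
by rewrite {2}v_eq scalerA mulVf // scale1r.
Qed.

Theorem mainTheorem7 (n : nat) (S : 'M[algC]_(2 ^ n) -> Prop) (pi : 'S_n) :
  stabilizer_group n S ->
  (forall v, codespace n S v -> codespace n S (perm_op n pi *m v)) ->
  (forall w, codespace n S w -> exists v, codespace n S v /\ perm_op n pi *m v = w) ->
  ~ (exists c : algC, forall v, codespace n S v -> perm_op n pi *m v = c *: v) ->
  (exists c : algC, forall v, codespace n S v ->
     perm_op n pi *m (perm_op n pi *m v) = c *: v) ->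
  ~~ odd #[pi]%g.
Proof.
move=> _ _ _ not_scalar [c U2_scalar]; apply/negP => odd_order; apply: not_scalar.
exists (c ^+ #[pi]%g./2)^-1 => v Cv.
exact: mulmx_scale_of_odd_order odd_order (perm_op_order pi) (U2_scalar v Cv).
Qed.
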